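(* Let $\mathbb{F}_q$ be a finite field of characteristic $p\geq 5$ and let $A(x)$ be an Alltop function over $\mathbb{F}_q$. For $a,b\in\mathbb{F}_q$ let $\vec{v}_{ab}=\frac{1}{\sqrt{q}}\big(\omega_p^{\mathrm{tr}(A(x+a)+b(x+a))}\big)_{x\in\mathbb{F}_q}\in\mathbb{C}^q$, and let $V_a=\{\vec{v}_{ab}:b\in\mathbb{F}_q\}$. Then the standard basis $E$ of $\mathbb{C}^q$ together with the sets $V_a$, $a\in\mathbb{F}_q$, form a complete set of $q+1$ mutually unbiased bases in $\mathbb{C}^q$.
   Context: $\omega_p=e^{2\pi i/p}$ and $\mathrm{tr}$ is the absolute trace from $\mathbb{F}_q$ to $\mathbb{F}_p$. For $f:\mathbb{F}_q\to\mathbb{F}_q$, $\Delta_{f,a}(x)=f(x+a)-f(x)$; $f$ is planar if $x\mapsto\Delta_{f,a}(x)$ is a bijection for all $a\neq0$; $A$ is an Alltop function if $\Delta_{A,a}$ is planar for all $a\neq0$. Two orthonormal bases $B_1,B_2$ of $\mathbb{C}^d$ are unbiased if $|\langle\vec{x}|\vec{y}\rangle|=1/\sqrt{d}$ for all $\vec{x}\in B_1,\vec{y}\in B_2$ (standard Hermitian inner product); a set of pairwise unbiased orthonormal bases is a set of mutually unbiased bases, and it is complete if it has $d+1$ bases. *)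

From HB Require Import structures.
From mathcomp Require Import all_boot all_order all_algebra all_field.
Set Implicit Arguments. Unset Strict Implicit. Unset Printing Implicit Defensive.
Import Order.TTheory GRing.Theory Num.Theory.
Local Open Scope ring_scope.

Section Defs.
Variable F : finFieldType.

Definition Delta (f : F -> F) (a : F) : F -> F := fun x => f (x + a) - f x.

Definition planar (f : F -> F) : Prop :=
  forall a : F, a != 0 -> bijective (Delta f a).

Definition alltop (A : F -> F) : Prop :=
  forall a : F, a != 0 -> planar (Delta A a).

(* absolute trace F_q -> F_p, q = p^n, as an element of the prime subfield of F *)
Definition abs_trace (p : nat) (x : F) : F :=
  \sum_(i < logn p #|F|) x ^+ (p ^ i)%N.

(* the trace value read as an integer in {0,..,p-1} (its residue in F_p) *)
Definition trace_nat (p : nat) (x : F) : nat :=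
  index (abs_trace p x) [seq (k%:R : F) | k <- iota 0 p].

(* omega_p = e^{2 pi i / p} : p.-root (-1) = e^{i pi / p} in algC *)
Definition omega (p : nat) : algC := (p.-root (-1)) ^+ 2.

Definition vec := F -> algC.

Definition inner (u v : vec) : algC := \sum_x (u x)^* * v x.

Definition is_onb (B : F -> vec) : Prop :=
  (forall i j, inner (B i) (B j) = (i == j)%:R) /\
  (forall v : vec, exists c : F -> algC, forall x, v x = \sum_i c i * B i x).

Definition unbiased (B1 B2 : F -> vec) : Prop :=
  forall i j, `|inner (B1 i) (B2 j)| = (sqrtC (#|F|%:R))^-1.

Definition mub (I : finType) (Bs : I -> F -> vec) : Prop :=
  (forall k, is_onb (Bs k)) /\ (forall k l, k != l -> unbiased (Bs k) (Bs l)).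

Definition complete_mub (I : finType) (Bs : I -> F -> vec) : Prop :=
  mub Bs /\ #|I| = (#|F|).+1.

Definition std_basis : F -> vec := fun y x => (x == y)%:R.

Definition alltop_vec (p : nat) (A : F -> F) (a b : F) : vec :=
  fun x => (sqrtC (#|F|%:R))^-1 * omega p ^+ trace_nat p (A (x + a) + b * (x + a)).

Definition alltop_family (p : nat) (A : F -> F) : option F -> F -> vec :=
  fun o => match o with None => std_basis | Some a => alltop_vec p A a end.
End Defs.

From HB Require Import structures.
From mathcomp Require Import all_boot all_order all_algebra all_field.
From mathcomp Require Import ring.
Import Order.TTheory GRing.Theory Num.Theory.
Set Implicit Arguments.
Unset Strict Implicit.
Unset Printing Implicit Defensive.
Local Open Scope ring_scope.

(* The absolute trace is an additive map onto the prime field,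
   so psi x := omega_p ^ tr x is a nontrivial additive character of F and
   sum_x psi (c x + d) vanishes unless c = 0.  This makes every V_a
   orthonormal and complete, while E and V_a are unbiased because every
   entry of v_ab has modulus q^(-1/2).  For a <> a' the inner product of
   v_ab and v_a'b' is q^-1 sum_x psi (h x) with
   h x = A (x + a') - A (x + a) + affine; each Delta_d h is a translate of
   Delta_d Delta_(a'-a) A plus a constant, hence h is planar, and for planar h
   |sum_x psi (h x)|^2 = sum_d sum_y psi (Delta_d h y) = q. *)

Section PrimeCharacteristic.
Variables (R : fieldType) (p : nat).
Hypothesis pcharRp : p \in [pchar R].

Lemma natr_inj_pchar (k l : nat) :
  (k < p)%N -> (l < p)%N -> k%:R = l%:R :> R -> k = l.
Proof.
wlog le_kl : k l / (k <= l)%N.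
  by move=> W hk hl e; case/orP: (leq_total k l) => h; [exact: W | apply/esym/W].
move=> hk hl e; apply/eqP.
rewrite -(modn_small hk) -(modn_small hl) eq_sym eqn_mod_dvd //.
by rewrite (dvdn_pcharf pcharRp) natrB // e subrr.
Qed.

(* The p distinct elements k%:R, k < p, exhaust the roots of 'X^p - 'X. *)
Lemma frobenius_fixed_natr (y : R) :
  y ^+ p = y -> y \in [seq k%:R | k <- iota 0 p].
Proof.
move=> yp; apply/negPn/negP => y_notin.
have p_gt1 : (1 < p)%N by exact/prime_gt1/(pcharf_prime pcharRp).
pose P : {poly R} := 'X^p - 'X.
have sizeP : size P = p.+1.
  by rewrite size_polyDl ?size_polyXn // size_polyN size_polyX ltnS.
have rootP (z : R) : z ^+ p = z -> root P z.
  by move=> zp; rewrite /root !hornerE zp subrr.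
have := @max_poly_roots _ P (y :: [seq k%:R | k <- iota 0 p]).
rewrite -size_poly_eq0 sizeP /= size_map size_iota ltnn y_notin rootP //=.
rewrite map_inj_in_uniq ?iota_uniq; last first.
  by move=> k l; rewrite !mem_iota !add0n; apply: natr_inj_pchar.
suff -> : all (root P) [seq k%:R | k <- iota 0 p] by move/(_ isT isT isT).
apply/allP => _ /mapP [k _ ->]; apply: rootP.
by rewrite -(pFrobenius_autE pcharRp) rmorph_nat.
Qed.

End PrimeCharacteristic.

Lemma poly_vanishing_eq0 (F : finFieldType) (P : {poly F}) :
  (size P <= #|F|)%N -> (forall x, root P x) -> P = 0.
Proof.
move=> sizeP rootP; apply/eqP/negP => /negP P_neq0.
have := max_poly_roots P_neq0 (introT allP (fun x _ => rootP x)) (enum_uniq F).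
by rewrite -cardE ltnNge sizeP.
Qed.

Section AbsoluteTrace.
Variables (F : finFieldType) (p : nat).
Hypothesis pcharFp : p \in [pchar F].

Let n := logn p #|F|.
Let p_prime : prime p := pcharf_prime pcharFp.

Lemma card_pchar : #|F| = (p ^ n)%N.
Proof. exact: card_pprimeChar pcharFp. Qed.

Lemma logn_card_gt0 : (0 < n)%N.
Proof. by rewrite lt0n; apply: contraTneq (finNzRing_gt1 F); rewrite card_pchar => ->. Qed.

Lemma abs_traceD (x y : F) : abs_trace p (x + y) = abs_trace p x + abs_trace p y.
Proof.
rewrite /abs_trace -big_split /=; apply: eq_bigr => i _.
by apply: exprDn_pchar; rewrite pnatX (pnatE _ p_prime) pcharFp.
Qed.

Lemma abs_trace_fixed (x : F) : abs_trace p x ^+ p = abs_trace p x.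
Proof.
rewrite -(pFrobenius_autE pcharFp) /abs_trace rmorph_sum /=.
have [m n_eq] : exists m, n = m.+1 by exists n.-1; rewrite prednK // logn_card_gt0.
rewrite -/n n_eq big_ord_recr big_ord_recl /= addrC.
rewrite pFrobenius_autE -exprM -expnSr -n_eq -card_pchar expf_card expn0 expr1.
by congr (_ + _); apply: eq_bigr => i _; rewrite pFrobenius_autE -exprM -expnSr.
Qed.

Lemma abs_trace_neq0 : exists y : F, abs_trace p y != 0.
Proof.
apply/existsP; rewrite -negb_forall; apply/negP => /forallP tr0.
have [m n_eq] : exists m, n = m.+1 by exists n.-1; rewrite prednK // logn_card_gt0.
have p_gt1 := prime_gt1 p_prime.
pose P : {poly F} := \sum_(i < n) 'X^(p ^ i).
have sizeP : (size P <= (p ^ m).+1)%N.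
  apply: leq_trans (size_sum _ _ _) _; apply/bigmax_leqP => i _.
  by rewrite size_polyXn ltnS leq_exp2l // -ltnS -n_eq.
have coefP : P`_(p ^ m) = 1.
  rewrite /P coef_sum n_eq big_ord_recr /= coefXn eqxx big1 ?add0r // => i _.
  by rewrite coefXn eqn_exp2l // gtn_eqF.
suff P0 : P = 0 by move: coefP; rewrite P0 coef0 => /esym/eqP; rewrite oner_eq0.
apply: poly_vanishing_eq0 => [|y].
  by apply: leq_trans sizeP _; rewrite card_pchar n_eq ltn_exp2l.
by rewrite /root horner_sum; under eq_bigr do rewrite hornerXn; exact: tr0.
Qed.

Lemma trace_nat_lt (x : F) : (trace_nat p x < p)%N.
Proof.
have := frobenius_fixed_natr pcharFp (abs_trace_fixed x).
by rewrite -index_mem size_map size_iota.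
Qed.

Lemma abs_traceE (x : F) : abs_trace p x = (trace_nat p x)%:R.
Proof.
have tr_in := frobenius_fixed_natr pcharFp (abs_trace_fixed x).
rewrite /trace_nat -{1}(nth_index 0 tr_in) (nth_map 0%N) ?size_iota ?trace_nat_lt //.
by rewrite nth_iota ?add0n ?trace_nat_lt.
Qed.

Lemma trace_natD (x y : F) :
  trace_nat p (x + y) = ((trace_nat p x + trace_nat p y) %% p)%N.
Proof.
apply: (natr_inj_pchar pcharFp); rewrite ?trace_nat_lt ?ltn_mod ?prime_gt0 //.
by rewrite GRing.natr_mod_pchar // -abs_traceE abs_traceD !abs_traceE natrD.
Qed.

End AbsoluteTrace.

Section RootOfUnity.
Variable p : nat.
Hypothesis p_prime : prime p.

Lemma omega_expp : omega p ^+ p = 1.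
Proof. by rewrite /omega exprAC rootCK ?prime_gt0 // sqrrN expr1n. Qed.

Lemma omega_prim_root : p.-primitive_root (omega p).
Proof.
have [m prim_m m_dvd] := prim_order_exists (prime_gt0 p_prime) omega_expp.
have [/eqP m1|/eqP mp] := orP ((primeP p_prime).2 m m_dvd); first last.
  by move: prim_m; rewrite mp.
move: (prim_expr_order prim_m); rewrite m1 expr1 /omega => /eqP.
rewrite sqrf_eq1 => /orP [/eqP root1|/eqP rootN1].
  have := rootCK (prime_gt0 p_prime) (-1 : algC); rewrite root1 expr1n => one_eqN1.
  by have := @ltr10 algC; rewrite one_eqN1 ltrN10.
by have := @rootC_lt0 algC p (-1) (prime_gt1 p_prime); rewrite rootN1 ltrN10.
Qed.

Lemma norm_omega : `|omega p| = 1.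
Proof.
apply/eqP; rewrite -(pexpr_eq1 (prime_gt0 p_prime)) ?normr_ge0 //.
by rewrite -normrX omega_expp normr1.
Qed.

End RootOfUnity.

Section AdditiveCharacter.
Variables (F : finFieldType) (p : nat).
Hypothesis pcharFp : p \in [pchar F].

Let p_prime : prime p := pcharf_prime pcharFp.

Definition add_char (x : F) : algC := omega p ^+ trace_nat p x.

Lemma add_charD x y : add_char (x + y) = add_char x * add_char y.
Proof. by rewrite /add_char trace_natD // expr_mod ?omega_expp // exprD. Qed.

Lemma norm_add_char x : `|add_char x| = 1.
Proof. by rewrite /add_char normrX norm_omega // expr1n. Qed.

Lemma add_char_neq0 x : add_char x != 0.
Proof. by rewrite -normr_eq0 norm_add_char oner_eq0. Qed.

Lemma add_char0 : add_char 0 = 1.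
Proof. by apply: (mulfI (add_char_neq0 0)); rewrite -add_charD addr0 mulr1. Qed.

Lemma add_charN x : add_char (- x) = (add_char x)^*.
Proof.
apply: (mulfI (add_char_neq0 x)).
by rewrite -add_charD subrr add_char0 -normCK norm_add_char expr1n.
Qed.

Lemma add_char_nontrivial : exists y, add_char y != 1.
Proof.
have [y tr_y] := abs_trace_neq0 pcharFp; exists y.
rewrite /add_char -(prim_order_dvd (omega_prim_root p_prime)).
apply: contra tr_y => /(dvdn_leq _); rewrite abs_traceE //.
by case: (trace_nat p y) (trace_nat_lt pcharFp y) => // k k_lt /(_ isT); rewrite leqNgt k_lt.
Qed.

Lemma sum_add_char : \sum_x add_char x = 0.
Proof.
have [y psi_y] := add_char_nontrivial.
have shift : \sum_x add_char x = add_char y * \sum_x add_char x.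
  rewrite mulr_sumr (reindex_inj (addIr y)) /=.
  by apply: eq_bigr => x _; rewrite add_charD mulrC.
apply/eqP; move/eqP: shift; rewrite -subr_eq0 -{1}[\sum_x _]mul1r -mulrBl mulf_eq0.
by rewrite subr_eq0 eq_sym (negbTE psi_y).
Qed.

Lemma sum_add_char_inj (g : F -> F) : injective g -> \sum_x add_char (g x) = 0.
Proof. by move=> g_inj; have := sum_add_char; rewrite (reindex_inj g_inj). Qed.

Lemma sum_add_char_affine (c d : F) :
  \sum_x add_char (c * x + d) = if c == 0 then add_char d *+ #|F| else 0.
Proof.
have [->|c_neq0] := eqVneq c 0.
  by under eq_bigr do rewrite mul0r add0r; rewrite sumr_const.
by apply: sum_add_char_inj => x y /addIr /(mulfI c_neq0).
Qed.

(* Expanding the square and substituting x = y + d turns the double sum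
   into sum_d sum_y psi (Delta h d y); only d = 0 survives. *)
Lemma norm_sum_add_char_planar (h : F -> F) :
  planar h -> `|\sum_x add_char (h x)| = sqrtC #|F|%:R.
Proof.
move=> h_planar; set S := \sum_x _.
suff sqrS : `|S| ^+ 2 = #|F|%:R by rewrite -sqrS exprCK ?normr_ge0.
rewrite normCK rmorph_sum mulr_suml /=.
transitivity (\sum_y \sum_d add_char (Delta h d y)).
  under eq_bigr do rewrite mulr_sumr.
  rewrite exchange_big; apply: eq_bigr => y _ /=.
  rewrite (reindex_inj (addrI y)); apply: eq_bigr => d _.
  by rewrite -add_charN -add_charD.
rewrite exchange_big (bigD1 0) //= [X in _ + X]big1 ?addr0.
  by under eq_bigr do rewrite /Delta addr0 subrr add_char0; rewrite sumr_const.
move=> d d_neq0; have [g hg gh] := h_planar d d_neq0.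
exact/sum_add_char_inj/(can_inj hg).
Qed.

End AdditiveCharacter.

Section HermitianVectors.
Variable F : finFieldType.

Lemma inv_sqrt_card_ge0 : 0 <= (sqrtC #|F|%:R)^-1 :> algC.
Proof. by rewrite invr_ge0 sqrtC_ge0 ler0n. Qed.

Lemma sqrt_card_neq0 : sqrtC #|F|%:R != 0 :> algC.
Proof. by rewrite sqrtC_eq0 pnatr_eq0 gtn_eqF // ltnW // finNzRing_gt1. Qed.

Lemma inv_sqrt_card_sqr : (sqrtC #|F|%:R)^-1 ^+ 2 * #|F|%:R = 1 :> algC.
Proof. by rewrite exprVn sqrtCK mulVf // -sqrtC_eq0 sqrt_card_neq0. Qed.

Lemma inner_conjC (u v : vec F) : inner u v = (inner v u)^*.
Proof.
rewrite /inner rmorph_sum; apply: eq_bigr => x _.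
by rewrite rmorphM /= conjCK mulrC.
Qed.

Lemma unbiased_sym (B1 B2 : F -> vec F) : unbiased B1 B2 -> unbiased B2 B1.
Proof. by move=> B12 i j; rewrite inner_conjC norm_conjC B12. Qed.

Lemma is_onb_dual (B : F -> vec F) :
  (forall i j, inner (B i) (B j) = (i == j)%:R) ->
  (forall x y, \sum_i (B i x)^* * B i y = (x == y)%:R) -> is_onb B.
Proof.
move=> B_orth B_dual; split=> // v; exists (fun i => inner (B i) v) => y.
transitivity (\sum_x v x * (x == y)%:R).
  by rewrite (bigD1 y) //= eqxx mulr1 big1 ?addr0 // => x /negbTE->; rewrite mulr0.
under eq_bigr do rewrite -B_dual mulr_sumr.
rewrite exchange_big /=; apply: eq_bigr => i _; rewrite /inner mulr_suml.
by apply: eq_bigr => x _; rewrite mulrCA mulrA.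
Qed.

Lemma std_basis_onb : is_onb (@std_basis F).
Proof.
have sum_eq (i j : F) : \sum_z ((z == i)%:R)^* * (z == j)%:R = (i == j)%:R :> algC.
  rewrite (bigD1 i) //= eqxx conjC1 mul1r big1 ?addr0 // => z /negbTE->.
  by rewrite conjC0 mul0r.
apply: is_onb_dual => [i j|x y]; first exact: sum_eq.
by rewrite -sum_eq; apply: eq_bigr => z _; rewrite /std_basis ![_ == z]eq_sym.
Qed.

End HermitianVectors.

Lemma alltop_diff_planar (F : finFieldType) (A : F -> F) (a a' b b' : F) :
  alltop A -> a != a' ->
  planar (fun x => A (x + a') + b' * (x + a') - (A (x + a) + b * (x + a))).
Proof.
move=> A_alltop a_neq d d_neq0.
have a_diff_neq0 : a' - a != 0 by rewrite subr_eq0 eq_sym.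
have translate_bij (c : F) : bijective (+%R^~ c) := Bijective (addrK c) (subrK c).
apply: (eq_bij (bij_comp (translate_bij ((b' - b) * d))
  (bij_comp (A_alltop _ a_diff_neq0 d d_neq0) (translate_bij a)))) => x /=.
rewrite /Delta (_ : x + a + d + (a' - a) = x + d + a'); last by ring.
rewrite (_ : x + a + d = x + d + a); last by ring.
rewrite (_ : x + a + (a' - a) = x + a'); last by ring.
ring.
Qed.

Section AlltopBases.
Variables (F : finFieldType) (p : nat) (A : F -> F).
Hypothesis pcharFp : p \in [pchar F].

Local Notation v := (alltop_vec p A).
Local Notation s := (sqrtC #|F|%:R)^-1.

Lemma alltop_vec_conj_mul a a' b b' x y :
  (v a b x)^* * v a' b' y =
  s ^+ 2 * add_char p (A (y + a') + b' * (y + a') - (A (x + a) + b * (x + a))).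
Proof.
rewrite rmorphM /= geC0_conj ?inv_sqrt_card_ge0 // /alltop_vec -/(add_char _ _).
by rewrite -add_charN // mulrACA -add_charD // addrC expr2.
Qed.

Lemma alltop_vec_orthonormal a b b' : inner (v a b) (v a b') = (b == b')%:R.
Proof.
rewrite /inner; under eq_bigr do rewrite alltop_vec_conj_mul.
rewrite -mulr_sumr.
rewrite (eq_bigr (fun x => add_char p ((b' - b) * x + (b' - b) * a))); last first.
  by move=> x _; congr add_char; ring.
rewrite sum_add_char_affine // subr_eq0 eq_sym.
have [<-|_] := eqVneq b b'; last by rewrite mulr0.
by rewrite subrr mul0r add_char0 // mulr1n inv_sqrt_card_sqr.
Qed.

Lemma alltop_vec_dual a x y : \sum_b (v a b x)^* * v a b y = (x == y)%:R.
Proof.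
under eq_bigr do rewrite alltop_vec_conj_mul.
rewrite -mulr_sumr.
rewrite (eq_bigr (fun b => add_char p ((y - x) * b + (A (y + a) - A (x + a))))); last first.
  by move=> b _; congr add_char; ring.
rewrite sum_add_char_affine // subr_eq0 eq_sym.
have [<-|_] := eqVneq x y; last by rewrite mulr0.
by rewrite subrr add_char0 // mulr1n inv_sqrt_card_sqr.
Qed.

Lemma alltop_vec_onb a : is_onb (v a).
Proof. exact: is_onb_dual (alltop_vec_orthonormal a) (alltop_vec_dual a). Qed.

Lemma std_basis_alltop_unbiased a : unbiased (@std_basis F) (v a).
Proof.
move=> i b; rewrite /inner (bigD1 i) //= big1 => [|x x_neq]; last first.
  by rewrite /std_basis (negbTE x_neq) conjC0 mul0r.
rewrite /std_basis eqxx conjC1 mul1r addr0 normrM ger0_norm ?inv_sqrt_card_ge0 //.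
by rewrite -/(add_char _ _) norm_add_char // mulr1.
Qed.

Lemma alltop_vec_unbiased a a' :
  alltop A -> a != a' -> unbiased (v a) (v a').
Proof.
move=> A_alltop a_neq b b'; rewrite /inner; under eq_bigr do rewrite alltop_vec_conj_mul.
rewrite -mulr_sumr normrM norm_sum_add_char_planar //; last exact: alltop_diff_planar.
rewrite ger0_norm ?exprn_ge0 ?inv_sqrt_card_ge0 //.
by move: (sqrtC _) (sqrt_card_neq0 F) => r r_neq0; field.
Qed.

End AlltopBases.

Theorem theorem7 (F : finFieldType) (p : nat) (A : F -> F) :
  p \in [pchar F] -> (5 <= p)%N -> alltop A ->
  complete_mub (alltop_family p A).
Proof.
move=> pcharFp _ A_alltop; split; last by rewrite card_option.
split=> [[a|]|[a|] [a'|] //= a_neq].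
- exact: alltop_vec_onb.
- exact: std_basis_onb.
- exact: alltop_vec_unbiased.
- exact/unbiased_sym/std_basis_alltop_unbiased.
- exact: std_basis_alltop_unbiased.
Qed.
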